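(* Let $B\in\mathbb R^{n\times m}$, $f:\mathbb R^m\to\mathbb R$, $h:\mathbb R^n\to\mathbb R$ differentiable, and $\mathcal I_{\mathcal V}$, $\mathcal I_{\mathcal Q}$ symmetric positive definite. Let $e(u)=u-\mathcal I_{\mathcal V}^{-1}\nabla f(u)$, $h_B(p)=h(p)+\frac12(B\mathcal I_{\mathcal V}^{-1}B^\top p,p)$, $\mathcal G^u(u,p)=-\mathcal I_{\mathcal V}^{-1}(\nabla f(u)+B^\top p)$, $\mathcal G^p(u,p)=-\mathcal I_{\mathcal Q}^{-1}(\nabla h_B(p)-Be(u))$. Assume $\nabla f$ and $\nabla h_B$ are Lipschitz continuous with constants $L_{f,\mathcal I_{\mathcal V}}$ and $L_{h_B,\mathcal I_{\mathcal Q}}$, i.e. $\|\nabla f(u_1)-\nabla f(u_2)\|_{\mathcal I_{\mathcal V}^{-1}}\le L_{f,\mathcal I_{\mathcal V}}\|u_1-u_2\|_{\mathcal I_{\mathcal V}}$ and $\|\nabla h_B(p_1)-\nabla h_B(p_2)\|_{\mathcal I_{\mathcal Q}^{-1}}\le L_{h_B,\mathcal I_{\mathcal Q}}\|p_1-p_2\|_{\mathcal I_{\mathcal Q}}$, and let $L_{e,\mathcal I_{\mathcal V}}$ be the Lipschitz constant of $e$ with respect to $\|\cdot\|_{\mathcal I_{\mathcal V}}$. Then for all $u_1,u_2\in\mathbb R^m$, $p_1,p_2\in\mathbb R^n$, with $v_i=u_i+\mathcal I_{\mathcal V}^{-1}B^\top p_i$, $$\|\mathcal G^u(u_1,p_1)-\mathcal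 G^u(u_2,p_2)\|_{\mathcal I_{\mathcal V}}\le L_{e,\mathcal I_{\mathcal V}}\|u_1-u_2\|_{\mathcal I_{\mathcal V}}+\|v_1-v_2\|_{\mathcal I_{\mathcal V}},$$ $$\|\mathcal G^p(u_1,p_1)-\mathcal G^p(u_2,p_2)\|_{\mathcal I_{\mathcal Q}}\le L_{e,\mathcal I_{\mathcal V}}L_S\|u_1-u_2\|_{\mathcal I_{\mathcal V}}+L_{h_B,\mathcal I_{\mathcal Q}}\|p_1-p_2\|_{\mathcal I_{\mathcal Q}},$$ where $L_S^2=\lambda_{\max}(\mathcal I_{\mathcal Q}^{-1}B\mathcal I_{\mathcal V}^{-1}B^\top)$.
   Context: For SPD $M$, $\|x\|_M=(Mx,x)^{1/2}$. *)

From HB Require Import structures.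
From mathcomp Require Import all_boot all_order all_algebra.
From mathcomp Require Import all_classical all_reals all_analysis.
Set Implicit Arguments. Unset Strict Implicit. Unset Printing Implicit Defensive.
Import Order.TTheory GRing.Theory Num.Theory.
Import numFieldNormedType.Exports.
Local Open Scope ring_scope.

Definition dotv (R : realType) (k : nat) (x y : 'cV[R]_k) : R := (x^T *m y) 0 0.

Definition spd (R : realType) (k : nat) (M : 'M[R]_k) : Prop :=
  M^T = M /\ forall x : 'cV[R]_k, x != 0 -> 0 < dotv (M *m x) x.

Definition mnorm (R : realType) (k : nat) (M : 'M[R]_k) (x : 'cV[R]_k) : R :=
  Num.sqrt (dotv (M *m x) x).

Definition is_gradient (R : realType) (k : nat) (f : 'cV[R]_k -> R)
  (g : 'cV[R]_k -> 'cV[R]_k) : Prop :=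
  forall u, differentiable f u /\ forall v, 'd f u v = dotv (g u) v.

Definition efun (R : realType) (m : nat) (IV : 'M[R]_m) (gf : 'cV[R]_m -> 'cV[R]_m)
  (u : 'cV[R]_m) : 'cV[R]_m := u - invmx IV *m gf u.

Definition hB (R : realType) (n m : nat) (B : 'M[R]_(n, m)) (IV : 'M[R]_m)
  (h : 'cV[R]_n -> R) (p : 'cV[R]_n) : R :=
  h p + 2^-1 * dotv (B *m invmx IV *m B^T *m p) p.

Definition Gu (R : realType) (n m : nat) (B : 'M[R]_(n, m)) (IV : 'M[R]_m)
  (gf : 'cV[R]_m -> 'cV[R]_m) (u : 'cV[R]_m) (p : 'cV[R]_n) : 'cV[R]_m :=
  - (invmx IV *m (gf u + B^T *m p)).

Definition Gp (R : realType) (n m : nat) (B : 'M[R]_(n, m)) (IV : 'M[R]_m)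
  (IQ : 'M[R]_n) (gf : 'cV[R]_m -> 'cV[R]_m) (ghB : 'cV[R]_n -> 'cV[R]_n)
  (u : 'cV[R]_m) (p : 'cV[R]_n) : 'cV[R]_n :=
  - (invmx IQ *m (ghB p - B *m efun IV gf u)).

Definition is_lambda_max (R : realType) (k : nat) (M : 'M[R]_k) (lam : R) : Prop :=
  eigenvalue M lam /\ forall a, eigenvalue M a -> a <= lam.

From HB Require Import structures.
From mathcomp Require Import all_boot all_order all_algebra.
From mathcomp Require Import all_classical all_reals all_analysis.
From mathcomp Require Import ring lra.
Set Implicit Arguments. Unset Strict Implicit. Unset Printing Implicit Defensive.
Import Order.TTheory GRing.Theory Num.Theory.
Import numFieldNormedType.Exports.
Local Open Scope ring_scope.

(* Both estimates follow from the triangle inequality for the energy norms, once the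
   differences are rewritten as
     G^u(u1,p1) - G^u(u2,p2) = (e u1 - e u2) - (v1 - v2),
     G^p(u1,p1) - G^p(u2,p2) = I_Q^-1 B (e u1 - e u2) - I_Q^-1 (grad h_B p1 - grad h_B p2).
   The one genuine estimate is ||I_Q^-1 B w||_{I_Q} <= L_S ||w||_{I_V}, i.e.
   (B^T I_Q^-1 B w, w) <= L_S^2 (I_V w, w).  The Rayleigh quotient
   (B^T I_Q^-1 B x, x) / (I_V x, x) attains its maximum mu on the compact unit sphere, at
   a generalized eigenvector: B^T I_Q^-1 B d = mu I_V d.  Then (B d)^T is a left
   eigenvector of I_Q^-1 B I_V^-1 B^T for mu, unless B d = 0 in which case mu = 0; either
   way mu <= L_S^2. *)

Lemma discriminant_le0 (R : realFieldType) (a b c : R) : 0 <= c ->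
  (forall t, 0 <= a + 2 * t * b + t ^+ 2 * c) -> b ^+ 2 <= a * c.
Proof.
move=> c_ge0 pos; have a_ge0 : 0 <= a by have := pos 0; lra.
have [c0|c_gt0] := eqVneq c 0.
  have [b0|bn0] := eqVneq b 0; first by rewrite b0 c0 expr0n mulr0.
  have := pos (- (a + 1) / (2 * b)).
  have -> : a + 2 * (- (a + 1) / (2 * b)) * b + (- (a + 1) / (2 * b)) ^+ 2 * c = -1.
    by rewrite c0; field.
  lra.
have {}c_gt0 : 0 < c by rewrite lt_neqAle eq_sym c_gt0.
have := pos (- b / c); rewrite -(ler_pM2r c_gt0) mul0r.
have -> : (a + 2 * (- b / c) * b + (- b / c) ^+ 2 * c) * c = a * c - b ^+ 2.
  by field; rewrite gt_eqF.
by rewrite subr_ge0.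
Qed.

Section InnerProduct.
Variables (R : realType) (k : nat).
Implicit Types x y z : 'cV[R]_k.

Lemma dotvC x y : dotv x y = dotv y x.
Proof. by rewrite /dotv -[in LHS](trmxK y) -trmx_mul mxE. Qed.

Lemma dotvE x y : dotv x y = \sum_i x i 0 * y i 0.
Proof. by rewrite /dotv mxE; apply: eq_bigr => i _; rewrite mxE. Qed.

Lemma dotvDl x y z : dotv (x + y) z = dotv x z + dotv y z.
Proof. by rewrite /dotv linearD /= mulmxDl mxE. Qed.

Lemma dotvZl a x z : dotv (a *: x) z = a * dotv x z.
Proof. by rewrite /dotv linearZ /= -scalemxAl mxE. Qed.

Lemma dotvNl x z : dotv (- x) z = - dotv x z.
Proof. by rewrite -scaleN1r dotvZl mulN1r. Qed.

Lemma dotvDr x y z : dotv z (x + y) = dotv z x + dotv z y.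
Proof. by rewrite dotvC dotvDl !(dotvC z). Qed.

Lemma dotvZr a x z : dotv z (a *: x) = a * dotv z x.
Proof. by rewrite dotvC dotvZl dotvC. Qed.

Lemma dotv0l x : dotv 0 x = 0.
Proof. by rewrite -(scale0r 0) dotvZl mul0r. Qed.

Lemma dotvv_eq0 x : dotv x x = 0 -> x = 0.
Proof.
rewrite dotvE => /eqP; rewrite psumr_eq0 => [/allP x0|i _]; last by rewrite -expr2 sqr_ge0.
apply/matrixP => i j; rewrite (ord1 j) mxE.
by have := x0 i (mem_index_enum _); rewrite -expr2 sqrf_eq0 => /eqP.
Qed.

End InnerProduct.

Lemma dotv_mulmxl (R : realType) k l (A : 'M[R]_(k, l)) x y :
  dotv (A *m x) y = dotv x (A^T *m y).
Proof. by rewrite /dotv trmx_mul mulmxA. Qed.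

Definition qform (R : realType) k (V : 'M[R]_k) (x : 'cV[R]_k) : R := dotv (V *m x) x.

Lemma mnormE (R : realType) k (V : 'M[R]_k) x : mnorm V x = Num.sqrt (qform V x).
Proof. by []. Qed.

Section QuadraticForm.
Variables (R : realType) (k : nat) (V : 'M[R]_k).
Implicit Types x y : 'cV[R]_k.

Lemma qform0 : qform V 0 = 0.
Proof. by rewrite /qform mulmx0 dotv0l. Qed.

Lemma qformZ a x : qform V (a *: x) = a ^+ 2 * qform V x.
Proof. by rewrite /qform -scalemxAr dotvZl dotvZr mulrA -expr2. Qed.

Lemma qformN x : qform V (- x) = qform V x.
Proof. by rewrite -scaleN1r qformZ sqrrN expr1n mul1r. Qed.

Lemma mnormN x : mnorm V (- x) = mnorm V x.
Proof. by rewrite !mnormE qformN. Qed.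

Hypothesis V_sym : V^T = V.

Lemma dotv_sym x y : dotv (V *m y) x = dotv (V *m x) y.
Proof. by rewrite dotv_mulmxl V_sym dotvC. Qed.

Lemma qformD x y : qform V (x + y) = qform V x + 2 * dotv (V *m x) y + qform V y.
Proof. by rewrite /qform mulmxDr dotvDl !dotvDr dotv_sym; ring. Qed.

Hypothesis V_psd : forall x, 0 <= qform V x.

Lemma qform_CauchySchwarz x y : dotv (V *m x) y ^+ 2 <= qform V x * qform V y.
Proof.
apply: discriminant_le0 => // t.
by have := V_psd (x + t *: y); rewrite qformD qformZ dotvZr mulrA.
Qed.

Lemma qform_eq0_mulmx d : qform V d = 0 -> V *m d = 0.
Proof.
move=> Vd0; apply: dotvv_eq0; apply/eqP; rewrite -sqrf_eq0 eq_le sqr_ge0 andbT.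
by apply: le_trans (qform_CauchySchwarz d (V *m d)) _; rewrite Vd0 mul0r.
Qed.

Lemma dotv_le_mnorm x y : dotv (V *m x) y <= mnorm V x * mnorm V y.
Proof.
rewrite !mnormE -sqrtrM //; apply: le_trans (ler_norm _) _.
by rewrite -sqrtr_sqr ler_sqrt ?mulr_ge0 ?qform_CauchySchwarz.
Qed.

Lemma mnormD x y : mnorm V (x + y) <= mnorm V x + mnorm V y.
Proof.
have := dotv_le_mnorm x y; rewrite !mnormE qformD => le_xy.
have hx := sqrtr_ge0 (qform V x); have hy := sqrtr_ge0 (qform V y).
rewrite -(ger0_norm (addr_ge0 hx hy)) -sqrtr_sqr ler_sqrt ?sqr_ge0 //.
rewrite sqrrD !sqr_sqrtr //; lra.
Qed.

End QuadraticForm.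

Section PositiveDefinite.
Variables (R : realType) (k : nat) (V : 'M[R]_k).
Hypothesis V_spd : spd V.

Lemma spd_qform_ge0 x : 0 <= qform V x.
Proof. by have [->|/V_spd.2/ltW] := eqVneq x 0; rewrite ?qform0. Qed.

Lemma spd_unitmx : V \in unitmx.
Proof.
rewrite unitmxE unitfE; apply/det0P => -[v vn0 vV0].
have : 0 < qform V v^T by apply: V_spd.2; rewrite trmx_eq0.
by rewrite /qform -{1}V_spd.1 -trmx_mul vV0 trmx0 dotv0l ltxx.
Qed.

Lemma mnorm_invmx x : mnorm V (invmx V *m x) = mnorm (invmx V) x.
Proof. by rewrite !mnormE /qform mulKVmx ?spd_unitmx // dotvC. Qed.

End PositiveDefinite.

Lemma qform_tr_continuous (R : realType) k (A : 'M[R]_k) :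
  continuous (fun x : 'rV[R]_k => qform A x^T).
Proof.
have -> : (fun x : 'rV[R]_k => qform A x^T) =
    (fun x => \sum_j (\sum_i A j i * x 0 i) * x 0 j).
  apply: funext => x; rewrite /qform dotvE; apply: eq_bigr => j _; rewrite !mxE.
  by congr (_ * _); apply: eq_bigr => i _; rewrite mxE.
apply: continuous_big => [|j _]; first exact: add_continuous.
move=> x; apply: continuousM; last exact: coord_continuous.
apply: continuous_big => [|i _ y]; first exact: add_continuous.
by apply: continuousM; [exact: cst_continuous | exact: coord_continuous].
Qed.

Lemma compact_unit_sphere (R : realType) k :
  compact [set x : 'rV[R]_k | `|x| = 1]%classic.
Proof.
apply: bounded_closed_compact.
  by exists 1; split; [exact: real1 | move=> r /ltW r1 x /= ->].
apply: (preimage_closed (f := fun x : 'rV[R]_k => `|x|) (D := [set 1]%classic)).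
  by move=> x _; apply: norm_continuous.
exact: closed_eq.
Qed.

(* The sphere is taken in row vectors, where the library proves that bounded closed sets
   are compact. *)
Lemma rayleigh_max_attained (R : realType) k (M V : 'M[R]_k) : spd V -> (0 < k)%N ->
  exists mu, (forall x, qform M x <= mu * qform V x) /\
    exists2 d, d != 0 & qform M d = mu * qform V d.
Proof.
move=> V_spd k_gt0.
pose S := [set x : 'rV[R]_k | `|x| = 1]%classic.
pose rq (x : 'rV[R]_k) := qform M x^T / qform V x^T.
have qV_gt0 (x : 'cV[R]_k) : x != 0 -> 0 < qform V x by apply: V_spd.2.
have S_normalize (x : 'rV[R]_k) : x != 0 -> S (`|x|^-1 *: x).
  by move=> xn0; rewrite /S /= normrZ normfV normr_id mulVf // normr_eq0.
have S_neq0 (x : 'rV[R]_k) : S x -> x != 0.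
  by rewrite /S /=; apply: contra_eqN => /eqP ->; rewrite normr0 eq_sym oner_eq0.
have rqZ a (x : 'rV[R]_k) : a != 0 -> rq (a *: x) = rq x.
  by move=> a0; rewrite /rq linearZ /= !qformZ invfM mulrACA mulfV ?mul1r ?expf_neq0.
have S0 : (S !=set0)%classic.
  have c0 : (const_mx 1 : 'rV[R]_k) != 0.
    apply/eqP => /matrixP /(_ 0 (Ordinal k_gt0)); rewrite !mxE => /eqP.
    by rewrite oner_eq0.
  by eexists; exact: (S_normalize _ c0).
have rq_cont : {within S, continuous rq}%classic.
  apply: continuous_in_subspaceT => x /set_mem /S_neq0 xn0.
  apply: (continuousM (s := fun x => qform M x^T) (t := fun x => (qform V x^T)^-1)).
    exact: qform_tr_continuous.
  apply: continuousV; last exact: qform_tr_continuous.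
  by rewrite gt_eqF ?qV_gt0 ?trmx_eq0.
have [c /set_mem Sc c_max] := compact_EVT_max S0 (@compact_unit_sphere R k) rq_cont.
have cn0 : c^T != 0 by rewrite trmx_eq0; exact: S_neq0.
exists (rq c); split; last by exists c^T; rewrite // /rq divfK ?gt_eqF ?qV_gt0.
move=> x; have [->|xn0] := eqVneq x 0; first by rewrite !qform0 mulr0.
have xTn0 : x^T != 0 by rewrite trmx_eq0.
have := c_max _ (mem_set (S_normalize _ xTn0)).
by rewrite rqZ ?invr_eq0 ?normr_eq0 // /rq trmxK ler_pdivrMr ?qV_gt0.
Qed.

Lemma pencil_max_eigenvector (R : realType) k (M V : 'M[R]_k) :
  M^T = M -> spd V -> (0 < k)%N ->
  exists mu, (forall x, qform M x <= mu * qform V x) /\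
    exists2 d : 'cV[R]_k, d != 0 & M *m d = mu *: (V *m d).
Proof.
move=> M_sym V_spd k_gt0.
have [mu [M_le [d dn0 qMd]]] := rayleigh_max_attained M V_spd k_gt0.
exists mu; split => //; exists d => //.
pose A := mu *: V - M.
have qformA y : qform A y = mu * qform V y - qform M y.
  by rewrite /qform mulmxBl -scalemxAl dotvDl dotvNl dotvZl.
have A_sym : A^T = A by rewrite linearB linearZ /= V_spd.1 M_sym.
apply/eqP; rewrite eq_sym -subr_eq0 scalemxAl -mulmxBl -/A; apply/eqP.
by apply: qform_eq0_mulmx => [//|y|]; rewrite qformA ?subr_ge0 ?qMd ?subrr.
Qed.

Lemma pencil_eigenvalue (R : realType) n m (B : 'M[R]_(n, m)) (Q : 'M[R]_n)
    (V : 'M[R]_m) mu (d : 'cV[R]_m) :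
  Q^T = Q -> V^T = V -> V \in unitmx -> B *m d != 0 ->
  B^T *m Q *m B *m d = mu *: (V *m d) -> eigenvalue (Q *m B *m invmx V *m B^T) mu.
Proof.
move=> Q_sym V_sym V_unit Bd_neq0 Md; apply/eigenvalueP.
exists (B *m d)^T; last by rewrite trmx_eq0.
have dM : (B *m d)^T *m Q *m B = mu *: (d^T *m V).
  apply: trmx_inj; rewrite !trmx_mul !trmxK Q_sym !mulmxA Md linearZ /=.
  by rewrite trmx_mul trmxK V_sym.
by rewrite !mulmxA dM -!scalemxAl mulmxK // trmx_mul.
Qed.

Lemma qform_le_lambda_max (R : realType) n m (B : 'M[R]_(n, m)) (IV : 'M[R]_m)
    (IQ : 'M[R]_n) lam :
  spd IV -> spd IQ -> 0 <= lam ->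
  is_lambda_max (invmx IQ *m B *m invmx IV *m B^T) lam ->
  forall x, qform (B^T *m invmx IQ *m B) x <= lam * qform IV x.
Proof.
move=> IV_spd IQ_spd lam_ge0 [_ lam_max] x.
have [m0|m_gt0] := posnP m.
  suff -> : x = 0 by rewrite !qform0 mulr0.
  by apply/matrixP => -[i lt_im]; exfalso; rewrite m0 in lt_im.
set M := B^T *m invmx IQ *m B.
have IQinv_sym : (invmx IQ)^T = invmx IQ by rewrite trmx_inv IQ_spd.1.
have M_sym : M^T = M by rewrite /M !trmx_mul trmxK IQinv_sym mulmxA.
have [mu [M_le [d dn0 Md]]] := pencil_max_eigenvector M_sym IV_spd m_gt0.
suff mu_le : mu <= lam by apply: le_trans (M_le x) (ler_wpM2r (spd_qform_ge0 _ _) mu_le).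
have [Bd0|Bdn0] := eqVneq (B *m d) 0; last first.
  by apply/lam_max/(pencil_eigenvalue IQinv_sym IV_spd.1 (spd_unitmx IV_spd) Bdn0).
suff -> : mu = 0 by [].
have : mu *: (IV *m d) = 0 by rewrite -Md /M -mulmxA Bd0 mulmx0.
move/eqP; rewrite scalemx_eq0 => /orP[/eqP //|IVd0].
by move: dn0; rewrite -(mulKmx (spd_unitmx IV_spd) d) (eqP IVd0) mulmx0 eqxx.
Qed.

Lemma mnorm_invmx_mulmx_le (R : realType) n m (B : 'M[R]_(n, m)) (IV : 'M[R]_m)
    (IQ : 'M[R]_n) LS w :
  spd IV -> spd IQ -> 0 <= LS ->
  is_lambda_max (invmx IQ *m B *m invmx IV *m B^T) (LS ^+ 2) ->
  mnorm IQ (invmx IQ *m (B *m w)) <= LS * mnorm IV w.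
Proof.
move=> IV_spd IQ_spd LS_ge0 LS_max.
have qB : qform (invmx IQ) (B *m w) = qform (B^T *m invmx IQ *m B) w.
  by rewrite /qform dotvC dotv_mulmxl dotvC !mulmxA.
have -> : LS * mnorm IV w = Num.sqrt (LS ^+ 2 * qform IV w).
  by rewrite sqrtrM ?sqr_ge0 // sqrtr_sqr ger0_norm.
rewrite mnorm_invmx // mnormE qB ler_sqrt ?mulr_ge0 ?sqr_ge0 ?spd_qform_ge0 //.
exact: qform_le_lambda_max IV_spd IQ_spd (sqr_ge0 _) LS_max w.
Qed.

Section SplittingOperator.
Variables (R : realType) (n m : nat) (B : 'M[R]_(n, m)) (IV : 'M[R]_m) (IQ : 'M[R]_n).
Variables (gf : 'cV[R]_m -> 'cV[R]_m) (ghB : 'cV[R]_n -> 'cV[R]_n).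
Implicit Types (u : 'cV[R]_m) (p : 'cV[R]_n).

Lemma GuB u1 p1 u2 p2 :
  Gu B IV gf u1 p1 - Gu B IV gf u2 p2 =
  (efun IV gf u1 - efun IV gf u2) -
  ((u1 + invmx IV *m B^T *m p1) - (u2 + invmx IV *m B^T *m p2)).
Proof.
rewrite /Gu /efun !mulmxDr !mulmxA.
by apply/matrixP => i j; rewrite !mxE; ring.
Qed.

Lemma GpB u1 p1 u2 p2 :
  Gp B IV IQ gf ghB u1 p1 - Gp B IV IQ gf ghB u2 p2 =
  invmx IQ *m (B *m (efun IV gf u1 - efun IV gf u2)) - invmx IQ *m (ghB p1 - ghB p2).
Proof.
rewrite /Gp !mulmxBr.
by apply/matrixP => i j; rewrite !mxE; ring.
Qed.

Hypotheses (IV_spd : spd IV) (IQ_spd : spd IQ).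
Variable Le : R.
Hypothesis e_lip :
  forall u1 u2, mnorm IV (efun IV gf u1 - efun IV gf u2) <= Le * mnorm IV (u1 - u2).

Lemma mnorm_GuB_le u1 p1 u2 p2 :
  mnorm IV (Gu B IV gf u1 p1 - Gu B IV gf u2 p2) <=
  Le * mnorm IV (u1 - u2) +
  mnorm IV ((u1 + invmx IV *m B^T *m p1) - (u2 + invmx IV *m B^T *m p2)).
Proof.
rewrite GuB; apply: le_trans (mnormD IV_spd.1 (spd_qform_ge0 IV_spd) _ _) _.
apply: lerD; first exact: e_lip.
by rewrite mnormN.
Qed.

Lemma mnorm_GpB_le LhB LS u1 p1 u2 p2 :
  (forall p1 p2, mnorm (invmx IQ) (ghB p1 - ghB p2) <= LhB * mnorm IQ (p1 - p2)) ->
  0 <= LS -> is_lambda_max (invmx IQ *m B *m invmx IV *m B^T) (LS ^+ 2) ->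
  mnorm IQ (Gp B IV IQ gf ghB u1 p1 - Gp B IV IQ gf ghB u2 p2) <=
  Le * LS * mnorm IV (u1 - u2) + LhB * mnorm IQ (p1 - p2).
Proof.
move=> ghB_lip LS_ge0 LS_max.
rewrite GpB; apply: le_trans (mnormD IQ_spd.1 (spd_qform_ge0 IQ_spd) _ _) _.
apply: lerD.
  apply: le_trans (mnorm_invmx_mulmx_le _ IV_spd IQ_spd LS_ge0 LS_max) _.
  by rewrite mulrAC mulrC; apply: ler_wpM2r.
by rewrite mnormN mnorm_invmx //; apply: ghB_lip.
Qed.

End SplittingOperator.

Theorem lemma3p3 (R : realType) (n m : nat) (B : 'M[R]_(n, m))
  (f : 'cV[R]_m -> R) (h : 'cV[R]_n -> R)
  (gf : 'cV[R]_m -> 'cV[R]_m) (ghB : 'cV[R]_n -> 'cV[R]_n)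
  (IV : 'M[R]_m) (IQ : 'M[R]_n) (Lf LhB Le LS : R) :
  spd IV -> spd IQ ->
  (forall p, differentiable h p) ->
  is_gradient f gf ->
  is_gradient (hB B IV h) ghB ->
  (forall u1 u2, mnorm (invmx IV) (gf u1 - gf u2) <= Lf * mnorm IV (u1 - u2)) ->
  (forall p1 p2, mnorm (invmx IQ) (ghB p1 - ghB p2) <= LhB * mnorm IQ (p1 - p2)) ->
  (forall u1 u2, mnorm IV (efun IV gf u1 - efun IV gf u2) <= Le * mnorm IV (u1 - u2)) ->
  0 <= LS ->
  is_lambda_max (invmx IQ *m B *m invmx IV *m B^T) (LS ^+ 2) ->
  forall (u1 u2 : 'cV[R]_m) (p1 p2 : 'cV[R]_n),
    let v1 := u1 + invmx IV *m B^T *m p1 in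
    let v2 := u2 + invmx IV *m B^T *m p2 in
    mnorm IV (Gu B IV gf u1 p1 - Gu B IV gf u2 p2)
      <= Le * mnorm IV (u1 - u2) + mnorm IV (v1 - v2) /\
    mnorm IQ (Gp B IV IQ gf ghB u1 p1 - Gp B IV IQ gf ghB u2 p2)
      <= Le * LS * mnorm IV (u1 - u2) + LhB * mnorm IQ (p1 - p2).
Proof.
move=> IV_spd IQ_spd _ _ _ _ ghB_lip e_lip LS_ge0 LS_max u1 u2 p1 p2 v1 v2.
by split; [exact: mnorm_GuB_le | exact: mnorm_GpB_le].
Qed.
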